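(* Let $n\ge 2$ and $1\le p\le n-1$. Let $a_{n,p}$ be the number of $\alpha\in\mathcal{OCT}_n$ with $F(\alpha)=\{1\}$ and $h(\alpha)=p$. Then $a_{n,p}$ also equals the number of $\alpha\in\mathcal{OCT}_n$ with $F(\alpha)=\{n\}$ and $h(\alpha)=p$, and $a_{n,p}=\binom{n-2}{p-1}$.
   Context: $X_n=\{1,2,\dots,n\}$ with its usual order; maps are written on the right ($x\alpha$). A map $\alpha:X_n\to X_n$ is order-preserving if $x\le y$ implies $x\alpha\le y\alpha$, and a contraction if $|x\alpha-y\alpha|\le|x-y|$ for all $x,y$. $\mathcal{OCT}_n$ is the set of all order-preserving contractions $X_n\to X_n$ (defined on all of $X_n$). For such $\alpha$: the height is $h(\alpha)=|\mathrm{Im}\,\alpha|$, and $F(\alpha)=\{x\in X_n:x\alpha=x\}$ is the set of fixed points. *)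

From mathcomp Require Import all_boot.
Set Implicit Arguments. Unset Strict Implicit. Unset Printing Implicit Defensive.

(* X_n = {1,...,n} is represented by 'I_n, the element i : 'I_n standing for i+1.
   This shift preserves order and distances, so order-preservation and the
   contraction property are unaffected. *)

Definition order_preserving n (a : {ffun 'I_n -> 'I_n}) : bool :=
  [forall x : 'I_n, forall y : 'I_n, (x <= y) ==> (a x <= a y)].

Definition contraction n (a : {ffun 'I_n -> 'I_n}) : bool :=
  [forall x : 'I_n, forall y : 'I_n,
     (maxn (a x) (a y) - minn (a x) (a y) <= maxn x y - minn x y)].

Definition OCT n : {set {ffun 'I_n -> 'I_n}} :=
  [set a | order_preserving a && contraction a].

Definition height n (a : {ffun 'I_n -> 'I_n}) : nat := #|[set a x | x : 'I_n]|.

Definition fixpts n (a : {ffun 'I_n -> 'I_n}) : {set 'I_n} := [set x | a x == x].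

From mathcomp Require Import all_boot.
From mathcomp Require Import zify.
Set Implicit Arguments. Unset Strict Implicit. Unset Printing Implicit Defensive.

(* Points of X_n are the ordinals 0..n-1, so the fixed point 1 is ord0 and n is
   ord_max.  An order-preserving contraction is exactly a map whose consecutive
   values differ by 0 or 1 ("steps").  If F(a) = {1}, then a 1 = 1 and, since
   a 2 lies in {1, 2} but is not fixed, a 2 = 1; the map is then determined by
   which of the remaining m = n - 2 steps (from 2 to 3, ..., from n-1 to n) go
   up.  Conversely every set D of up-steps yields such a map, the "ramp" of D,
   whose image is the initial segment {1, ..., |D| + 1}.  Hence the maps with
   F(a) = {1} and height p correspond bijectively to the (p-1)-subsets of an
   m-set, giving binomial(n-2, p-1).  The equality with the maps fixing only n
   comes from conjugation by the order-reversal x |-> n + 1 - x, which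
   preserves OCT_n and heights and exchanges the fixed points 1 and n. *)

Lemma OCTP n (a : {ffun 'I_n -> 'I_n}) :
  reflect (forall x y : 'I_n, x <= y -> a x <= a y <= a x + (y - x))
          (a \in OCT n).
Proof.
rewrite inE /order_preserving /contraction.
apply: (iffP andP) => [[/forallP mono /forallP contr] x y xy | H].
  have := implyP (forallP (mono x) y) xy.
  have := forallP (contr x) y; lia.
split; apply/forallP => x; apply/forallP => y.
  by apply/implyP => /H /andP[].
by case: (leqP x y) => [/H | /ltnW /H]; lia.
Qed.

Lemma OCT_stepP n (a : {ffun 'I_n.+1 -> 'I_n.+1}) :
  reflect (forall x, x < n -> a (inord x) <= a (inord x.+1) <= a (inord x) + 1)
          (a \in OCT n.+1).
Proof.
apply: (iffP idP) => [/OCTP H x hx | H].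
  have := H (inord x) (inord x.+1).
  rewrite !inordK ?ltnS ?(ltnW hx) //.
  by rewrite subSn // subnn; apply.
apply/OCTP => x y xy.
have steps k z : z + k <= n ->
    a (inord z) <= a (inord (z + k)) <= a (inord z) + k.
  elim: k => [|k IH] hz; first by rewrite !addn0 leqnn.
  have hzk : z + k < n by rewrite -addnS.
  have := IH (ltnW hzk); have := H (z + k) hzk; rewrite (addnS z k); lia.
by have := steps (y - x) x; rewrite subnKC // !inord_val; apply; apply: leq_ord.
Qed.

Lemma ord0_inord n : (ord0 : 'I_n.+1) = inord 0.
Proof. by apply: val_inj; rewrite /= inordK. Qed.

Lemma ord_max_inord n : (ord_max : 'I_n.+1) = inord n.
Proof. by apply: val_inj; rewrite /= inordK. Qed.

(* The only fixed point is the bottom iff the first two values are the bottom: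
   a fixed bottom forces the second value into {0, 1}, and 1 is excluded. *)
Lemma fixpts_ord0 m (a : {ffun 'I_m.+2 -> 'I_m.+2}) : a \in OCT m.+2 ->
  (fixpts a == [set ord0]) = (a ord0 == 0 :> nat) && (a (inord 1) == 0 :> nat).
Proof.
move=> aO; apply/eqP/andP => [F | [/eqP a0 /eqP a1]].
  have : ord0 \in fixpts a by rewrite F inE.
  have : inord 1 \notin fixpts a by rewrite F inE -(inj_eq val_inj) /= inordK.
  rewrite !inE -!(inj_eq val_inj) /= inordK // => a1 /eqP a0.
  have := elimT (OCT_stepP _) aO 0 (ltn0Sn _); rewrite -ord0_inord a0; move: a1; lia.
apply/setP => -[[|x] hx]; rewrite !inE -!(inj_eq val_inj) /=.
  by rewrite (_ : Ordinal hx = ord0) ?a0 //; apply: val_inj.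
move/OCTP: aO => /(_ (inord 1) (Ordinal hx)) /=.
rewrite inordK // a1 => /(_ isT); lia.
Qed.

Lemma card_ord_le n c : c <= n -> #|[set y : 'I_n.+1 | y <= c]| = c.+1.
Proof.
move=> hc; have -> : [set y : 'I_n.+1 | y <= c] = widen_ord (hc : c.+1 <= n.+1) @: setT.
  apply/setP => y; rewrite inE; apply/idP/imsetP => [hy | [z _ ->]].
    by exists (Ordinal (hy : y < c.+1)) => //; apply: val_inj.
  by rewrite /= -ltnS.
rewrite card_imset ?cardsT ?card_ord //.
by move=> u v /(congr1 val) /= e; apply: val_inj.
Qed.

(* A map of OCT_n starting at the bottom has the initial segment up to its last
   value as image (a discrete intermediate value theorem), so its height is
   that value plus one. *)
Lemma height_from_bottom n (a : {ffun 'I_n.+1 -> 'I_n.+1}) :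
  a \in OCT n.+1 -> a ord0 = 0 :> nat -> height a = (a ord_max).+1.
Proof.
move=> aO a0; rewrite /height -(card_ord_le (leq_ord (a ord_max))).
apply: eq_card => y; rewrite [RHS]inE; apply/imsetP/idP => [[x _ ->] | hy].
  by case/andP: (OCTP _ aO x ord_max (leq_ord x)).
have reach k : k <= n -> forall z, z <= a (inord k) ->
    exists x : 'I_n.+1, a x = z :> nat.
  elim: k => [|k IH] hk z hz.
    by exists ord0 => /=; move: hz; rewrite -ord0_inord a0; lia.
  case: (leqP z (a (inord k))) => hzk; first exact: IH (ltnW hk) z hzk.
  by exists (inord k.+1) => /=; have := elimT (OCT_stepP _) aO k hk; lia.
have hy_last : y <= a (inord n) by rewrite -ord_max_inord.
have [x ax] := reach n (leqnn n) y hy_last.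
by exists x => //; apply: val_inj.
Qed.

(* climb P x counts the up-steps among the first x - 1 steps described by P;
   the first step (from 0 to 1) is always flat. *)
Definition climb (P : pred nat) (x : nat) : nat := \sum_(i < x.-1) P i.

Lemma climb_small (P : pred nat) x : x <= 1 -> climb P x = 0.
Proof. by case: x => [|[|]] // _; rewrite /climb big_ord0. Qed.

Lemma climbSS (P : pred nat) x : climb P x.+2 = climb P x.+1 + P x.
Proof. by rewrite /climb big_ord_recr. Qed.

(* A climb never exceeds the number of steps taken, so ramps stay in range. *)
Lemma climb_le (P : pred nat) x : climb P x <= x.-1.
Proof.
rewrite /climb -[leqRHS]card_ord -sum1_card.
by apply: leq_sum => i _; case: (P i).
Qed.

Definition natmem m (D : {set 'I_m}) : pred nat :=
  fun z => [exists j in D, val j == z].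

Lemma natmemE m (D : {set 'I_m}) (i : 'I_m) : natmem D i = (i \in D).
Proof.
apply/existsP/idP => [[j /andP[jD /eqP e]] | iD]; first by rewrite -(val_inj e).
by exists i; rewrite iD eqxx.
Qed.

Lemma climb_last m (D : {set 'I_m}) : climb (natmem D) m.+1 = #|D|.
Proof.
rewrite /climb -sum1_card [RHS]big_mkcond /=.
by apply: eq_bigr => i _; rewrite natmemE; case: (i \in D).
Qed.

(* The ramp of D: the map of X_(m+2) that is flat on its first step and goes
   up on step i + 2 exactly when i is in D. *)
Definition ramp m (D : {set 'I_m}) : {ffun 'I_m.+2 -> 'I_m.+2} :=
  [ffun x : 'I_m.+2 => inord (climb (natmem D) x)].

Lemma rampE m (D : {set 'I_m}) (x : 'I_m.+2) :
  ramp D x = climb (natmem D) x :> nat.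
Proof.
rewrite ffunE /= inordK //; have := climb_le (natmem D) x.
have := ltn_ord x; lia.
Qed.

Lemma ramp_inord m (D : {set 'I_m}) k :
  k <= m.+1 -> ramp D (inord k) = climb (natmem D) k :> nat.
Proof. by move=> hk; rewrite rampE inordK. Qed.

Lemma ramp_inj m : injective (@ramp m).
Proof.
move=> D E eDE; apply/setP => i.
have climb_eq k : k <= m.+1 -> climb (natmem D) k = climb (natmem E) k.
  by move=> hk; rewrite -!ramp_inord ?eDE.
have := climb_eq i.+2 (ltn_ord i); rewrite !climbSS climb_eq; last exact: ltnW (ltn_ord i).
by move/addnI; rewrite !natmemE; case: (i \in D); case: (i \in E).
Qed.

Lemma ramp_OCT m (D : {set 'I_m}) : ramp D \in OCT m.+2.
Proof.
apply/OCT_stepP => x hx; rewrite !ramp_inord ?(ltnW hx) //.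
case: x {hx} => [|x]; first by rewrite !climb_small.
by rewrite climbSS; case: (natmem D x); lia.
Qed.

Lemma ramp_fixpts m (D : {set 'I_m}) : fixpts (ramp D) == [set ord0].
Proof.
by rewrite fixpts_ord0 ?ramp_OCT // rampE ramp_inord // !climb_small.
Qed.

Lemma ramp_height m (D : {set 'I_m}) : height (ramp D) = #|D|.+1.
Proof.
by rewrite height_from_bottom ?ramp_OCT ?rampE ?climb_last ?climb_small.
Qed.

Definition up_steps m (a : {ffun 'I_m.+2 -> 'I_m.+2}) : {set 'I_m} :=
  [set i : 'I_m | a (inord i.+2) != a (inord i.+1) :> nat].

Lemma ramp_up_steps m (a : {ffun 'I_m.+2 -> 'I_m.+2}) :
  a \in OCT m.+2 -> a ord0 = 0 :> nat -> a (inord 1) = 0 :> nat ->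
  a = ramp (up_steps a).
Proof.
move=> aO a0 a1.
have val_a x : x <= m.+1 -> a (inord x) = climb (natmem (up_steps a)) x :> nat.
  elim: x => [|[|x] IH] hx; first by rewrite -ord0_inord a0 climb_small.
    by rewrite a1 climb_small.
  rewrite climbSS -IH 1?ltnW // (natmemE _ (Ordinal (hx : x < m))) inE /=.
  by have := elimT (OCT_stepP _) aO x.+1 hx; case: eqP => /=; lia.
apply/ffunP => x; apply: val_inj => /=.
by rewrite rampE -val_a ?inord_val //; apply: leq_ord.
Qed.

Lemma fix_bottom_ramps m p : 1 <= p ->
  [set a in OCT m.+2 | (fixpts a == [set ord0]) && (height a == p)] =
  @ramp m @: [set D : {set 'I_m} | #|D| == p - 1].
Proof.
move=> hp; apply/setP => a; rewrite inE; apply/idP/imsetP.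
  case/and3P => aO; rewrite fixpts_ord0 // => /andP[/eqP a0 /eqP a1] /eqP ha.
  exists (up_steps a); last exact: ramp_up_steps.
  by rewrite inE; move: ha; rewrite {1}(ramp_up_steps aO a0 a1) ramp_height; lia.
case=> D; rewrite inE => /eqP hD ->.
by rewrite ramp_OCT ramp_fixpts ramp_height hD; lia.
Qed.

Definition reverse n (a : {ffun 'I_n -> 'I_n}) : {ffun 'I_n -> 'I_n} :=
  [ffun x => rev_ord (a (rev_ord x))].

Lemma reverseK n : involutive (@reverse n).
Proof. by move=> a; apply/ffunP => x; rewrite !ffunE !rev_ordK. Qed.

Lemma reverse_OCT n (a : {ffun 'I_n -> 'I_n}) :
  (reverse a \in OCT n) = (a \in OCT n).
Proof.
suff OCT_rev b : b \in OCT n -> reverse b \in OCT n.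
  by apply/idP/idP => [/OCT_rev|]; rewrite ?reverseK //; apply: OCT_rev.
move/OCTP => H; apply/OCTP => x y xy; rewrite !ffunE /=.
have := H (rev_ord y) (rev_ord x); rewrite /=.
have := ltn_ord x; have := ltn_ord y.
have := ltn_ord (b (rev_ord x)); have := ltn_ord (b (rev_ord y)); lia.
Qed.

Lemma reverse_height n (a : {ffun 'I_n -> 'I_n}) :
  height (reverse a) = height a.
Proof.
rewrite /height -[RHS](card_imset _ (@rev_ord_inj n)); apply: eq_card => y.
apply/imsetP/imsetP => [[x _ ->] | [_ /imsetP[x _ ->] ->]].
  by exists (a (rev_ord x)); [apply: imset_f | rewrite ffunE].
by exists (rev_ord x); rewrite ?ffunE ?rev_ordK.
Qed.

Lemma reverse_fixpts n (a : {ffun 'I_n.+1 -> 'I_n.+1}) :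
  (fixpts (reverse a) == [set ord0]) = (fixpts a == [set ord_max]).
Proof.
have fix_rev x : (x \in fixpts (reverse a)) = (rev_ord x \in fixpts a).
  by rewrite !inE ffunE -(inj_eq rev_ord_inj) rev_ordK.
have rev0 (x : 'I_n.+1) : (rev_ord x == ord0) = (x == ord_max).
  by rewrite -!(inj_eq val_inj) /=; have := ltn_ord x; lia.
apply/eqP/eqP => F; apply/setP => x.
  by rewrite -{1}(rev_ordK x) -fix_rev F !inE rev0.
by rewrite fix_rev F !inE -rev0 rev_ordK.
Qed.

Lemma card_fix_bottom_top n p :
  #|[set a in OCT n.+1 | (fixpts a == [set ord0]) && (height a == p)]| =
  #|[set a in OCT n.+1 | (fixpts a == [set ord_max]) && (height a == p)]|.
Proof.
rewrite -(card_imset _ (inv_inj (@reverseK n.+1))).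
rewrite (can2_imset_pre _ (@reverseK n.+1) (@reverseK n.+1)).
apply: eq_card => a; have OCT_rev := reverse_OCT a; rewrite !inE in OCT_rev.
by rewrite !inE OCT_rev reverse_fixpts reverse_height.
Qed.

Theorem lemma2p2 (m p : nat) (hp1 : 1 <= p) (hp2 : p <= m.+1) :
  let n := m.+2 in
  #|[set a in OCT n | (fixpts a == [set ord0]) && (height a == p)]| =
  #|[set a in OCT n | (fixpts a == [set ord_max]) && (height a == p)]|
  /\
  #|[set a in OCT n | (fixpts a == [set ord0]) && (height a == p)]| =
  'C(n - 2, p - 1).
Proof.
move=> n; split; first exact: card_fix_bottom_top.
rewrite fix_bottom_ramps // (card_imset _ (@ramp_inj m)).
by rewrite card_draws card_ord /n subn2.
Qed.
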